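(* Let $H\subseteq G$ be finite groups such that the interval $[H,G]$ of the subgroup lattice of $G$ is top Boolean. Then $[H,G]$ is $H$-cyclic, i.e. there exists $g\in G$ such that $\langle H,g\rangle=G$.
   Context: The interval $[H,G]$ is the lattice of subgroups $K$ with $H\subseteq K\subseteq G$, ordered by inclusion, with $K_1\vee K_2=\langle K_1,K_2\rangle$ and $K_1\wedge K_2=K_1\cap K_2$. Coatoms of a finite lattice are the maximal elements of $L\setminus\{\hat 1\}$; if $t$ is the meet of all coatoms, the top interval of $L$ is $[t,\hat 1]$. A finite lattice is top Boolean if its top interval is a Boolean lattice (distributive, bounded, every element has a unique complement). An interval $[H,G]$ is $H$-cyclic if there exists $g\in G$ with $\langle Hg\rangle=\langle H,g\rangle=G$. *)

From mathcomp Require Import all_boot all_order all_fingroup.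
Set Implicit Arguments. Unset Strict Implicit. Unset Printing Implicit Defensive.
Local Open Scope group_scope.

Definition interval (gT : finGroupType) (A B : {set gT}) : {set {group gT}} :=
  [set K : {group gT} | (A \subset K) && (K \subset B)].

Definition coatoms (gT : finGroupType) (H G : {set gT}) : {set {group gT}} :=
  [set K in interval H G | (K \proper G) &&
     [forall K' in interval H G, (K \subset K') ==> (K' \proper G) ==> (K' \subset K)]].

(* Meet of all coatoms (the meet of the empty family is the top element G). *)
Definition top_bottom (gT : finGroupType) (H G : {set gT}) : {set gT} :=
  G :&: \bigcap_(K in coatoms H G) (K : {set gT}).

(* The interval [A, B] is a Boolean lattice: distributive, and every element
   has a unique complement (boundedness is automatic: bottom A, top B). *)
Definition boolean_interval (gT : finGroupType) (A B : {set gT}) : Prop :=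
  (forall K1 K2 K3 : {group gT},
      K1 \in interval A B -> K2 \in interval A B -> K3 \in interval A B ->
      K1 :&: <<(K2 :|: K3)>> = <<((K1 :&: K2) :|: (K1 :&: K3))>>)
  /\
  (forall K : {group gT}, K \in interval A B ->
     exists K' : {group gT},
       [/\ K' \in interval A B, K :&: K' = A, <<(K :|: K')>> = B &
           forall K'' : {group gT}, K'' \in interval A B ->
             K :&: K'' = A -> <<(K :|: K'')>> = B -> K'' :=: K']).

Definition top_boolean (gT : finGroupType) (H G : {set gT}) : Prop :=
  boolean_interval (top_bottom H G) G.

From mathcomp Require Import all_boot all_order all_fingroup.
Set Implicit Arguments. Unset Strict Implicit. Unset Printing Implicit Defensive.
Local Open Scope group_scope.

(* Let [t] be the meet of the coatoms.  For a coatom [M], its complement [K]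
   in the Boolean interval [t, G] lies in every other coatom [N]: by
   distributivity [K = K :&: <<M :|: N>> = <<t :|: (K :&: N)>> = K :&: N].
   Picking [a_M] in [K :\: M] for every coatom [M], the product [g] of all
   the [a_M] lies outside every coatom, since all its factors but one lie in
   [M].  So [<<H :|: [set g]>>] is in no coatom, hence equals [G]. *)

Section Coatoms.
Variables (gT : finGroupType) (H G : {group gT}).

Lemma coatomsE (M : {group gT}) :
  (M \in coatoms H G) = [max M of K | (H \subset K) && (K \proper G)].
Proof.
apply/idP/maxgroupP.
- rewrite !inE => /and3P[/andP[sHM _] pMG /forall_inP maxM].
  split=> [|K /andP[sHK pKG] sMK]; first by rewrite sHM.
  apply/eqP; rewrite eqEsubset sMK andbT.
  by have := maxM K; rewrite inE sHK (proper_sub pKG) => /(_ isT); rewrite sMK pKG.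
- move=> [/andP[sHM pMG] maxM]; rewrite !inE sHM proper_sub //= pMG /=.
  apply/forall_inP => K; rewrite inE => /andP[sHK _].
  apply/implyP => sMK; apply/implyP => pKG.
  by rewrite (maxM K) // sHK.
Qed.

Lemma coatom_exists (K : {group gT}) :
  H \subset K -> K \proper G -> exists2 M : {group gT}, M \in coatoms H G & K \subset M.
Proof.
move=> sHK pKG.
pose P (L : {group gT}) := (H \subset L) && (L \proper G).
have [M maxM sKM] := @maxgroup_exists _ P K (introT andP (conj sHK pKG)).
by exists M; rewrite // coatomsE.
Qed.

Lemma join_coatoms (M N : {group gT}) :
  M \in coatoms H G -> N \in coatoms H G -> M != N -> <<M :|: N>> = G.
Proof.
rewrite !coatomsE => maxM maxN neMN.
have [/andP[sHM pMG] maxM'] := maxgroupP maxM.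
have [/andP[_ pNG] maxN'] := maxgroupP maxN.
have sMNG : <<M :|: N>> \subset G by rewrite gen_subG subUset !proper_sub.
have [//|pMNG] := eqVproper sMNG.
have sHMN : H \subset M <*> N := subset_trans sHM (joing_subl M N).
have eMN : M <*> N :=: M by apply: maxM'; rewrite ?sHMN ?joing_subl.
have sNM : N \subset M by rewrite -eMN joing_subr.
have eNM : M :=: N by apply: maxN'; rewrite ?sHM.
by case/eqP: neMN; apply: val_inj.
Qed.

Lemma top_bottom_sub_coatom (M : {group gT}) :
  M \in coatoms H G -> top_bottom H G \subset M.
Proof. by move=> cM; apply/subIset/orP; right; apply: bigcap_inf cM. Qed.

Lemma coatom_in_top_interval (M : {group gT}) :
  M \in coatoms H G -> M \in interval (top_bottom H G) G.
Proof.
move=> cM; rewrite inE top_bottom_sub_coatom //.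
by move: cM; rewrite coatomsE => /maxgroupp/andP[_ /proper_sub].
Qed.

End Coatoms.

Section Distributive.
Variables (gT : finGroupType) (t B : {set gT}).
Hypothesis distrib : forall K1 K2 K3 : {group gT},
  K1 \in interval t B -> K2 \in interval t B -> K3 \in interval t B ->
  K1 :&: <<K2 :|: K3>> = <<(K1 :&: K2) :|: (K1 :&: K3)>>.

Lemma disjoint_sub_of_join_top (K M N : {group gT}) :
  K \in interval t B -> M \in interval t B -> N \in interval t B ->
  K :&: M = t -> <<M :|: N>> = B -> K \subset N.
Proof.
move=> iK iM iN tKM BMN; have := distrib iK iM iN.
move: iK iN; rewrite !inE => /andP[stK sKB] /andP[stN _].
have stKN : t \subset K :&: N by rewrite subsetI stK.
rewrite BMN (setIidPl sKB) tKM (setUidPr stKN) genGid => ->.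
exact: subsetIr.
Qed.

End Distributive.

Lemma coatom_separating_elem (gT : finGroupType) (H G M : {group gT}) :
  top_boolean H G -> M \in coatoms H G ->
  exists2 a, a \in G :\: M & {in coatoms H G :\ M, forall N : {group gT}, a \in N}.
Proof.
move=> [distrib compl] cM; have iM := coatom_in_top_interval cM.
have [K [iK tMK BMK _]] := compl M iM.
have sKG : K \subset G by move: iK; rewrite inE => /andP[].
have nsKM : ~~ (K \subset M).
  apply: contraTN cM => sKM; rewrite coatomsE.
  apply/negP => /maxgroupp/andP[_]; rewrite -BMK (setUidPl sKM) genGid.
  by rewrite properE subxx andbF.
have [a Ka aM] := subsetPn nsKM.
exists a; first by rewrite inE aM (subsetP sKG).
move=> N /setD1P[neNM cN].
suff sKN : K \subset N by apply: subsetP sKN a Ka.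
apply: (disjoint_sub_of_join_top distrib iK iM (coatom_in_top_interval cN)).
  by rewrite setIC.
by rewrite (join_coatoms cM cN) // eq_sym.
Qed.

Lemma avoid_separated_family (gT : finGroupType) (G : {group gT})
    (A : {set {group gT}}) :
  {in A, forall M : {group gT},
    exists2 a, a \in G :\: M & {in A :\ M, forall N : {group gT}, a \in N}} ->
  exists2 g, g \in G & {in A, forall M : {group gT}, g \notin M}.
Proof.
move=> sepA.
(* Strengthened so that, in the induction step, the previous product lies in [M]. *)
suff [g Gg gA] : exists2 g, g \in G &
    {in A, forall N : {group gT}, (g \in N) = (N \notin enum A)}.
  by exists g => // M AM; rewrite gA // mem_enum AM.
have : {subset enum A <= A} by move=> M; rewrite mem_enum.
elim: (enum A) (enum_uniq A) => [_ _|M s IHs /= /andP[Ms us] sMsA].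
  by exists 1 => // N _; rewrite group1.
have ssA : {subset s <= A} by move=> N sN; apply: sMsA; rewrite inE sN orbT.
have [g' Gg' g'A] := IHs us ssA.
have AM : M \in A := sMsA M (mem_head M s).
have [a /setDP[Ga aM] aA] := sepA M AM.
exists (a * g'); first by rewrite groupM.
move=> N AN; rewrite in_cons.
have [-> | neNM] /= := eqVneq N M.
  by rewrite groupMr ?g'A // (negbTE aM).
by rewrite groupMl ?g'A // aA // !inE neNM.
Qed.

Theorem theorem3p2 (gT : finGroupType) (H G : {group gT}) :
  H \subset G -> top_boolean H G ->
  exists2 g : gT, g \in G & <<(H :|: [set g])>> = G.
Proof.
move=> sHG tbHG.
have [g Gg gA] := avoid_separated_family (fun M => coatom_separating_elem tbHG).
exists g => //.
have sHgG : <<H :|: [set g]>> \subset G by rewrite gen_subG subUset sHG sub1set.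
have [//|pHgG] := eqVproper sHgG.
have sHHg : H \subset <<H :|: [set g]>> := subset_trans (subsetUl _ _) (subset_gen _).
have [M cM sHgM] := coatom_exists sHHg pHgG.
case/negP: (gA M cM); apply: (subsetP sHgM).
by rewrite mem_gen // !inE eqxx orbT.
Qed.
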